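(* The map $F:K\times\mathbf S^k_{++}\to\mathbb{R}\cup\{\infty\}$ is continuous (with $\mathbb{R}\cup\{\infty\}$ carrying its order topology).
   Context: $\mathbf S^k_{++}$ is the set of $k\times k$ symmetric positive-definite matrices. $\mathcal I$ is a collection of nonempty subsets of $\{1,\dots,k\}$, $a\in\mathbb{R}^k\setminus\{0\}$. $P_I:\mathbb{R}^k\to\mathbb{R}^{|I|}$ is the coordinate projection onto $I$, and for $A\in\mathbf S^k_{++}$, $A_I^\dagger:=P_I^\top(P_IAP_I^\top)^{-1}P_I$. Costs $c_I\in\mathbb{R}^m_{\ge0}$ and $B_0\in\mathbb{R}^m_{>0}$; vector inequalities componentwise. $K=\{\underline\nu\in\mathbb{R}^{\mathcal I}:\underline\nu\ge0,\ \sum_I\nu_Ic_I\le B_0\}$. $F(\underline\nu,A)=a^\top(\sum_I\nu_IA_I^\dagger)^\dagger a$ if $a\in\operatorname{range}(\sum_I\nu_IA_I^\dagger)$ and $F(\underline\nu,A)=\infty$ otherwise; $\dagger$ denotes the Moore–Penrose pseudo-inverse. *)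

From HB Require Import structures.
From mathcomp Require Import all_boot all_order all_algebra.
From mathcomp Require Import all_classical all_reals all_analysis.
Set Implicit Arguments. Unset Strict Implicit. Unset Printing Implicit Defensive.
Import Order.TTheory GRing.Theory Num.Theory.
Import numFieldNormedType.Exports.
Local Open Scope ring_scope.
Local Open Scope classical_set_scope.

Section Defs.
Variable R : realType.

(* Penrose conditions (real matrices: conjugate transpose = transpose). *)
Definition penrose {p q} (M : 'M[R]_(p, q)) (X : 'M[R]_(q, p)) : Prop :=
  [/\ M *m X *m M = M, X *m M *m X = X,
      (M *m X)^T = M *m X & (X *m M)^T = X *m M].

(* Moore--Penrose pseudo-inverse: the (unique) matrix satisfying the
   Penrose conditions (xget picks it; it always exists). *)
Definition mp_pinv {p q} (M : 'M[R]_(p, q)) : 'M[R]_(q, p) :=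
  xget 0 (penrose M).

Definition coordproj {k} (I : {set 'I_k}) : 'M[R]_(#|I|, k) :=
  \matrix_(r < #|I|, j < k) ((@enum_val _ (mem I) r == j)%:R).

Definition Adag {k} (I : {set 'I_k}) (A : 'M[R]_k) : 'M[R]_k :=
  (coordproj I)^T *m invmx (coordproj I *m A *m (coordproj I)^T) *m coordproj I.

(* the collection \mathcal I is enumerated injectively by Is : 'I_n -> {set 'I_k} *)
Definition Msum {k n} (Is : 'I_n -> {set 'I_k}) (nu : 'rV[R]_n) (A : 'M[R]_k)
  : 'M[R]_k := \sum_(i < n) nu 0 i *: Adag (Is i) A.

Definition in_range {p q} (M : 'M[R]_(p, q)) (a : 'cV[R]_p) : Prop :=
  exists x : 'cV[R]_q, M *m x = a.

Definition Ffun {k n} (Is : 'I_n -> {set 'I_k}) (a : 'cV[R]_k)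
  (nu : 'rV[R]_n) (A : 'M[R]_k) : \bar R :=
  if asbool (in_range (Msum Is nu A) a)
  then ((a^T *m mp_pinv (Msum Is nu A) *m a) 0 0)%:E
  else +oo%E.

Definition Kset {m n} (c : 'I_n -> 'cV[R]_m) (B0 : 'cV[R]_m) : set 'rV[R]_n :=
  [set nu | (forall i, 0 <= nu 0 i) /\
            (forall j, \sum_(i < n) nu 0 i * c i j 0 <= B0 j 0)].

Definition Spd (k : nat) : set 'M[R]_k :=
  [set A | A^T = A /\ forall x : 'cV[R]_k, x != 0 -> 0 < (x^T *m A *m x) 0 0].

End Defs.

(* With [M := \sum_I nu_I A_I^dagger] symmetric positive semidefinite,
   F(nu, A) = sup_x (2 <a, x> - x^T M x): the supremum is attained at any [y]
   with [M y = a], and is infinite when [a] is not in the range of [M].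
   Each fixed [x] gives a lower bound continuous in (nu, A), so [F] is lower
   semicontinuous. Conversely, a decomposition [a = \sum_I P_I^T w_I] gives,
   block by block (Young's inequality for [P_I A P_I^T] and its inverse), the
   upper bound [\sum_I w_I^T (P_I A P_I^T) w_I / nu_I], which is continuous
   where the [nu_I] with [w_I <> 0] stay positive; for the weights coming
   from [M y0 = a] at the base point both bounds equal [F] there. *)

From HB Require Import structures.
From mathcomp Require Import all_boot all_order all_algebra.
From mathcomp Require Import all_classical all_reals all_analysis.
From mathcomp Require Import ring lra.
Import Order.TTheory GRing.Theory Num.Theory.
Import numFieldNormedType.Exports.
Set Implicit Arguments. Unset Strict Implicit. Unset Printing Implicit Defensive.
Local Open Scope ring_scope.
Local Open Scope classical_set_scope.

Section QuadraticForms.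
Variable R : realType.

Definition vdot k (x y : 'cV[R]_k) : R := (x^T *m y) 0 0.
Definition bform k (M : 'M[R]_k) (x y : 'cV[R]_k) : R := (x^T *m M *m y) 0 0.
Definition psd k (M : 'M[R]_k) := forall x, 0 <= bform M x x.

Lemma rV_mul_tr_eq0 n (v : 'rV[R]_n) : (v *m v^T) 0 0 = 0 -> v = 0.
Proof.
rewrite mxE; under eq_bigr do rewrite mxE.
move/eqP; rewrite psumr_eq0; last by move=> i _; rewrite -expr2 sqr_ge0.
move/allP => v0; apply/matrixP => i j; rewrite (ord1 i) !mxE.
have /v0 : j \in index_enum 'I_n by rewrite mem_index_enum.
by rewrite /= mulf_eq0 orbb => /eqP.
Qed.

Lemma bformDl k (M : 'M[R]_k) x y z : bform M (x + y) z = bform M x z + bform M y z.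
Proof. by rewrite /bform linearD /= !mulmxDl mxE. Qed.
Lemma bformDr k (M : 'M[R]_k) x y z : bform M z (x + y) = bform M z x + bform M z y.
Proof. by rewrite /bform !mulmxDr mxE. Qed.
Lemma bformNl k (M : 'M[R]_k) x z : bform M (- x) z = - bform M x z.
Proof. by rewrite /bform linearN /= !mulNmx mxE. Qed.
Lemma bformNr k (M : 'M[R]_k) x z : bform M z (- x) = - bform M z x.
Proof. by rewrite /bform !mulmxN mxE. Qed.
Lemma bformZl k (M : 'M[R]_k) c x z : bform M (c *: x) z = c * bform M x z.
Proof. by rewrite /bform linearZ /= -!scalemxAl mxE. Qed.
Lemma bformZr k (M : 'M[R]_k) c x z : bform M z (c *: x) = c * bform M z x.
Proof. by rewrite /bform -!scalemxAr mxE. Qed.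
Lemma bformZ k (M : 'M[R]_k) c x y : bform (c *: M) x y = c * bform M x y.
Proof. by rewrite /bform -scalemxAr -scalemxAl mxE. Qed.
Lemma bform_sum k I (r : seq I) P (f : I -> 'M[R]_k) x y :
  bform (\sum_(i <- r | P i) f i) x y = \sum_(i <- r | P i) bform (f i) x y.
Proof. by rewrite /bform mulmx_sumr mulmx_suml summxE. Qed.
Lemma bform0r k (M : 'M[R]_k) x : bform M x 0 = 0.
Proof. by rewrite /bform mulmx0 mxE. Qed.
Lemma bform0l k (M : 'M[R]_k) x : bform M 0 x = 0.
Proof. by rewrite /bform linear0 !mul0mx mxE. Qed.

Lemma bformC k (M : 'M[R]_k) x y : M^T = M -> bform M x y = bform M y x.
Proof.
have tr11 (N : 'M[R]_1) : N 0 0 = N^T 0 0 by rewrite mxE.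
by move=> sM; rewrite /bform tr11 !trmx_mul trmxK sM mulmxA.
Qed.

Lemma bform_mulmx k l (P : 'M[R]_(l, k)) (G : 'M[R]_l) x y :
  bform (P^T *m G *m P) x y = bform G (P *m x) (P *m y).
Proof. by rewrite /bform trmx_mul !mulmxA. Qed.

Lemma vdot_mulmx_sym k (M : 'M[R]_k) x y : M^T = M -> vdot (M *m y) x = bform M y x.
Proof. by move=> sM; rewrite /vdot /bform trmx_mul sM. Qed.

Lemma vdot_mulmx k l (P : 'M[R]_(l, k)) w x : vdot (P^T *m w) x = vdot w (P *m x).
Proof. by rewrite /vdot trmx_mul trmxK mulmxA. Qed.
Lemma vdotZr k (x z : 'cV[R]_k) c : vdot z (c *: x) = c * vdot z x.
Proof. by rewrite /vdot -scalemxAr mxE. Qed.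
Lemma vdot_sum k I (r : seq I) P (f : I -> 'cV[R]_k) x :
  vdot (\sum_(i <- r | P i) f i) x = \sum_(i <- r | P i) vdot (f i) x.
Proof. by rewrite /vdot raddf_sum mulmx_suml summxE. Qed.

Lemma bform_cross_le k (M : 'M[R]_k) y x : M^T = M -> psd M ->
  2 * vdot (M *m y) x - bform M x x <= bform M y y.
Proof.
move=> sM pM; have := pM (x - y).
rewrite bformDl !bformDr !bformNl !bformNr opprK vdot_mulmx_sym // (bformC y x sM).
lra.
Qed.

Lemma bform_invmx l (H : 'M[R]_l) u : H^T = H -> H \in unitmx ->
  bform H (invmx H *m u) (invmx H *m u) = bform (invmx H) u u.
Proof.
move=> sH uH; have sG : (invmx H)^T = invmx H by rewrite trmx_inv sH.
by rewrite /bform trmx_mul sG !mulmxA (mulmxKV uH).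
Qed.

Lemma invmx_psd l (H : 'M[R]_l) : H^T = H -> H \in unitmx -> psd H -> psd (invmx H).
Proof. by move=> sH uH pH u; rewrite -bform_invmx. Qed.

(* Young's inequality for the dual forms [H] and [H^-1]. *)
Lemma bform_inv_cross_le l (H : 'M[R]_l) (nu : R) (w u : 'cV[R]_l) :
  H^T = H -> H \in unitmx -> psd H -> 0 <= nu -> (0 < nu \/ w = 0) ->
  2 * vdot w u - nu * bform (invmx H) u u <= bform H w w / nu.
Proof.
move=> sH uH pH nu0 hnu.
have HG := bform_invmx u sH uH.
case: hnu => [nup|->]; last first.
  rewrite /vdot linear0 /= mul0mx mxE mulr0 bform0l mul0r add0r oppr_le0.
  by rewrite mulr_ge0 // invmx_psd.
have Hw : bform H w (invmx H *m u) = vdot w u.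
  by rewrite /bform /vdot mulmxA (mulmxK uH).
have := pH (nu *: (invmx H *m u) - w).
rewrite bformDl !bformDr !bformNl !bformNr !bformZl !bformZr opprK HG.
rewrite (bformC (invmx H *m u) w sH) Hw => h.
rewrite -subr_ge0.
have -> : bform H w w / nu - (2 * vdot w u - nu * bform (invmx H) u u) =
  (nu * (nu * bform (invmx H) u u) - nu * vdot w u - nu * vdot w u + bform H w w)
  / nu by field; rewrite gt_eqF.
by rewrite divr_ge0 ?(ltW nup) //; lra.
Qed.

End QuadraticForms.

Section MoorePenrose.
Variable R : realType.

Lemma gram_unitmx r n (F : 'M[R]_(r, n)) : row_free F -> F *m F^T \in unitmx.
Proof.
move=> fF; rewrite -row_free_unit; apply: inj_row_free => v vFF0.
have : (v *m F) *m (v *m F)^T = 0.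
  by rewrite trmx_mul mulmxA -(mulmxA v) vFF0 mul0mx.
move=> /(congr1 (fun M : 'M[R]_1 => M 0 0)); rewrite [RHS]mxE => /rV_mul_tr_eq0 vF0.
by apply: (row_free_inj fF); rewrite vF0 mul0mx.
Qed.

(* The witness comes from a full-rank factorisation [M = C F]. *)
Lemma penrose_exists p q (M : 'M[R]_(p, q)) : exists X, penrose M X.
Proof.
have [r [C [F [-> [fF fC]]]]] : exists r (C : 'M[R]_(p, r)) (F : 'M[R]_(r, q)),
    M = C *m F /\ row_free F /\ row_free C^T.
  exists (\rank M), (col_base M), (row_base M).
  split; first by rewrite mulmx_base.
  split; first exact: row_base_free.
  by rewrite /row_free mxrank_tr; have := col_base_full M; rewrite /row_full.
have uF := gram_unitmx fF.
have uC := gram_unitmx fC; rewrite trmxK in uC.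
set GF := invmx (F *m F^T); set GC := invmx (C^T *m C).
have sGF : GF^T = GF by rewrite /GF trmx_inv trmx_mul trmxK.
have sGC : GC^T = GC by rewrite /GC trmx_inv trmx_mul trmxK.
have kF s (X : 'M[R]_(s, r)) : X *m F *m F^T *m GF = X.
  by rewrite -!mulmxA (mulmxA F) mulmxV // mulmx1.
have kC s (X : 'M[R]_(s, r)) : X *m GC *m C^T *m C = X.
  by rewrite -!mulmxA mulVmx // mulmx1.
exists (F^T *m GF *m GC *m C^T).
have MX : (C *m F) *m (F^T *m GF *m GC *m C^T) = C *m GC *m C^T.
  by rewrite !mulmxA kF.
have XM : (F^T *m GF *m GC *m C^T) *m (C *m F) = F^T *m GF *m F.
  by rewrite !mulmxA kC.
split.
- by rewrite MX !mulmxA kC.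
- by rewrite XM !mulmxA kF.
- by rewrite MX !trmx_mul trmxK sGC mulmxA.
- by rewrite XM !trmx_mul trmxK sGF mulmxA.
Qed.

Lemma mp_pinvP p q (M : 'M[R]_(p, q)) : penrose M (mp_pinv M).
Proof. by have [X MX] := penrose_exists M; apply: (xgetPex 0 (ex_intro _ X MX)). Qed.

Lemma mp_pinv_bform k (M : 'M[R]_k) y : M^T = M ->
  ((M *m y)^T *m mp_pinv M *m (M *m y)) 0 0 = bform M y y.
Proof.
move=> sM; have [MXM _ _ _] := mp_pinvP M.
by rewrite /bform trmx_mul sM !mulmxA -(mulmxA _ M (mp_pinv M)) -(mulmxA _ (M *m _)) MXM.
Qed.

Lemma notin_range_ker k (M : 'M[R]_k) (a : 'cV[R]_k) : M^T = M -> ~ in_range M a ->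
  exists z, M *m z = 0 /\ vdot a z != 0.
Proof.
move=> sM aM.
have : ~~ (a^T <= M^T)%MS.
  apply/negP => /submxP [D aD]; apply: aM; exists D^T.
  by rewrite -(trmxK a) aD trmx_mul trmxK.
rewrite submxE; set K := cokermx M^T => aK.
exists (K *m (a^T *m K)^T); split.
  by rewrite mulmxA -{1}sM mulmx_coker mul0mx.
by rewrite /vdot mulmxA; apply/eqP => /rV_mul_tr_eq0 /eqP; apply/negP.
Qed.

(* Otherwise the left-hand side is unbounded along a kernel direction [z] of
   [M] with [<a, z> != 0]. *)
Lemma bounded_cross_in_range k (M : 'M[R]_k) (a : 'cV[R]_k) (U : R) : M^T = M ->
  (forall x, 2 * vdot a x - bform M x x <= U) -> in_range M a.
Proof.
move=> sM aU; have [//|aM] := pselect (in_range M a).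
have [z [Mz az]] := notin_range_ker sM aM.
have := aU (((U + 1) / (2 * vdot a z)) *: z).
rewrite vdotZr bformZl bformZr.
have -> : bform M z z = 0 by rewrite /bform -mulmxA Mz mulmx0 mxE.
have -> : 2 * ((U + 1) / (2 * vdot a z) * vdot a z) = U + 1 by field.
by rewrite !mulr0 subr0 gerDl ler10.
Qed.

End MoorePenrose.

Section PseudoInverseSum.
Variables (R : realType) (k n : nat) (Is : 'I_n -> {set 'I_k}).
Implicit Types (I : {set 'I_k}) (A : 'M[R]_k) (nu : 'rV[R]_n) (a y : 'cV[R]_k).

Definition principal_mx I A :=
  coordproj R I *m A *m (coordproj R I)^T.

Lemma coordproj_mul_tr I : coordproj R I *m (coordproj R I)^T = 1%:M.
Proof.
apply/matrixP => r s; rewrite !mxE.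
under eq_bigr do rewrite !mxE.
rewrite (bigD1 (enum_val r)) //= big1; last first.
  by move=> j /negbTE jr; rewrite eq_sym jr mul0r.
by rewrite eqxx mul1r addr0 (inj_eq (@enum_val_inj _ (mem I))) eq_sym.
Qed.

Lemma principal_mx_sym I A : A^T = A -> (principal_mx I A)^T = principal_mx I A.
Proof. by move=> sA; rewrite /principal_mx !trmx_mul trmxK sA mulmxA. Qed.

Lemma principal_mx_pos I A : Spd A ->
  forall v, v != 0 -> 0 < bform (principal_mx I A) v v.
Proof.
move=> [_ pA] v v0; rewrite /principal_mx -{1}(trmxK (coordproj R I)) bform_mulmx.
apply: pA; apply: contra v0 => /eqP Pv0.
by rewrite -(mul1mx v) -(coordproj_mul_tr I) -mulmxA Pv0 mulmx0.
Qed.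

Lemma principal_mx_psd I A : Spd A -> psd (principal_mx I A).
Proof.
move=> hA v; have [->|v0] := eqVneq v 0; first by rewrite bform0r.
exact/ltW/principal_mx_pos.
Qed.

Lemma principal_mx_unitmx I A : Spd A -> principal_mx I A \in unitmx.
Proof.
move=> hA; rewrite -row_free_unit; apply: inj_row_free => v vH0.
apply/eqP; rewrite -(inj_eq (can_inj (@trmxK _ _ _))) linear0; apply/negPn/negP.
move=> /(principal_mx_pos hA); rewrite /bform trmxK vH0 mul0mx mxE.
by rewrite ltxx.
Qed.

Lemma Adag_sym I A : Spd A -> (Adag I A)^T = Adag I A.
Proof.
case=> sA _; rewrite /Adag !trmx_mul trmxK trmx_inv.
by rewrite -/(principal_mx I A) principal_mx_sym // mulmxA.
Qed.

Lemma Adag_psd I A : Spd A -> psd (Adag I A).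
Proof.
move=> hA x; rewrite /Adag bform_mulmx -/(principal_mx I A).
apply: invmx_psd; last exact: principal_mx_psd.
- by apply: principal_mx_sym; case: hA.
- exact: principal_mx_unitmx.
Qed.

Lemma Msum_sym nu A : Spd A -> (Msum Is nu A)^T = Msum Is nu A.
Proof.
move=> hA; rewrite /Msum raddf_sum; apply: eq_bigr => i _.
have sAdag := Adag_sym (Is i) hA.
by apply/matrixP => r s; rewrite -{2}sAdag !mxE.
Qed.

Lemma Msum_psd nu A : Spd A -> (forall i, 0 <= nu 0 i) ->
  psd (Msum Is nu A).
Proof.
move=> hA nu0 x; rewrite /Msum bform_sum; apply: sumr_ge0 => i _.
by rewrite bformZ mulr_ge0 // Adag_psd.
Qed.

Lemma Msum_cross_le a nu A
    (w : forall i, 'cV[R]_#|Is i|) x :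
  Spd A -> (forall i, 0 <= nu 0 i) -> (forall i, 0 < nu 0 i \/ w i = 0) ->
  a = \sum_i (coordproj R (Is i))^T *m w i ->
  2 * vdot a x - bform (Msum Is nu A) x x <=
    \sum_i bform (principal_mx (Is i) A) (w i) (w i) / nu 0 i.
Proof.
move=> hA nu0 hw ->; rewrite vdot_sum /Msum bform_sum mulr_sumr -sumrB.
apply: ler_sum => i _; rewrite vdot_mulmx bformZ /Adag bform_mulmx.
apply: bform_inv_cross_le => //.
- by apply: principal_mx_sym; case: hA.
- exact: principal_mx_unitmx.
- exact: principal_mx_psd.
Qed.

Lemma Ffun_range a nu A y : Spd A ->
  Msum Is nu A *m y = a -> Ffun Is a nu A = (bform (Msum Is nu A) y y)%:E.
Proof.
move=> hA May; rewrite /Ffun asboolT; last by exists y.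
by rewrite -May mp_pinv_bform // Msum_sym.
Qed.

Lemma Ffun_notin_range a nu A :
  ~ in_range (Msum Is nu A) a -> Ffun Is a nu A = +oo%E.
Proof. by move=> aM; rewrite /Ffun asboolF. Qed.

Lemma Ffun_ge_cross a nu A x :
  Spd A -> (forall i, 0 <= nu 0 i) ->
  ((2 * vdot a x - bform (Msum Is nu A) x x)%:E <= Ffun Is a nu A)%E.
Proof.
move=> hA nu0; have [[y May]|aM] := pselect (in_range (Msum Is nu A) a).
  rewrite (Ffun_range hA May) lee_fin -May.
  by apply: bform_cross_le; [apply: Msum_sym | apply: Msum_psd].
by rewrite Ffun_notin_range // leey.
Qed.

Lemma Ffun_le_sum a nu A (w : forall i, 'cV[R]_#|Is i|) :
  Spd A -> (forall i, 0 <= nu 0 i) -> (forall i, 0 < nu 0 i \/ w i = 0) ->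
  a = \sum_i (coordproj R (Is i))^T *m w i ->
  (Ffun Is a nu A <=
    (\sum_i bform (principal_mx (Is i) A) (w i) (w i) / nu 0 i)%:E)%E.
Proof.
move=> hA nu0 hw aw.
have aU x := Msum_cross_le x hA nu0 hw aw.
have [y May] := bounded_cross_in_range (Msum_sym nu hA) aU.
rewrite (Ffun_range hA May) lee_fin.
by have := aU y; rewrite -{1}May vdot_mulmx_sym ?Msum_sym //; lra.
Qed.

(* When [M y = a], these weights give the decomposition of [a] along the
   blocks [P_i^T] for which the bound of [Msum_cross_le] is attained. *)
Definition range_weights nu A y i : 'cV[R]_#|Is i| :=
  nu 0 i *: (invmx (principal_mx (Is i) A) *m (coordproj R (Is i) *m y)).

Lemma Msum_mulmx_weights nu A y :
  Msum Is nu A *m y = \sum_i (coordproj R (Is i))^T *m range_weights nu A y i.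
Proof.
rewrite /Msum mulmx_suml; apply: eq_bigr => i _.
by rewrite /range_weights /Adag -scalemxAl -scalemxAr !mulmxA.
Qed.

Lemma range_weights_supp nu A y : (forall i, 0 <= nu 0 i) ->
  forall i, 0 < nu 0 i \/ range_weights nu A y i = 0.
Proof.
move=> nu_ge0 i; move: (nu_ge0 i); rewrite le_eqVlt => /orP [/eqP nu0|]; last by left.
by right; rewrite /range_weights -nu0 scale0r.
Qed.

Lemma sum_range_weights nu A y : Spd A ->
  \sum_i bform (principal_mx (Is i) A) (range_weights nu A y i)
    (range_weights nu A y i) / nu 0 i = bform (Msum Is nu A) y y.
Proof.
move=> hA; rewrite /Msum bform_sum; apply: eq_bigr => i _.
rewrite bformZ /range_weights bformZl bformZr bform_invmx; first last.
- exact: principal_mx_unitmx.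
- by apply: principal_mx_sym; case: hA.
rewrite /Adag bform_mulmx.
have [->|nu0] := eqVneq (nu 0 i) 0; first by rewrite !mul0r.
by rewrite mulrAC mulfV // mul1r.
Qed.

End PseudoInverseSum.

Section EntrywiseContinuity.
Variables (R : realType) (T : topologicalType) (p0 : T).

Definition mx_continuous_at m n (g : T -> 'M[R]_(m, n)) :=
  forall i j, continuous_at p0 (fun x => g x i j).

Lemma mx_continuous_cst m n (M : 'M[R]_(m, n)) : mx_continuous_at (fun _ => M).
Proof. by move=> i j; apply: cvg_cst. Qed.

Lemma mx_continuous_sum m n I (r : seq I) (P : pred I) (g : I -> T -> 'M[R]_(m, n)) :
  (forall l, mx_continuous_at (g l)) ->
  mx_continuous_at (fun x => \sum_(l <- r | P l) g l x).
Proof.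
move=> cg i j; rewrite /continuous_at; under eq_fun do rewrite summxE.
by rewrite summxE; apply: cvg_big => // [|l _]; [exact: add_continuous | exact: cg].
Qed.

Lemma mx_continuous_mul m n p (g : T -> 'M[R]_(m, n)) (h : T -> 'M[R]_(n, p)) :
  mx_continuous_at g -> mx_continuous_at h -> mx_continuous_at (fun x => g x *m h x).
Proof.
move=> cg ch i j; rewrite /continuous_at; under eq_fun do rewrite mxE.
rewrite mxE; apply: cvg_big => // [|l _]; first exact: add_continuous.
by apply: cvgM; [exact: cg | exact: ch].
Qed.

Lemma mx_continuous_scale m n (s : T -> R) (g : T -> 'M[R]_(m, n)) :
  continuous_at p0 s -> mx_continuous_at g -> mx_continuous_at (fun x => s x *: g x).
Proof.
move=> cs cg i j; rewrite /continuous_at; under eq_fun do rewrite mxE.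
by rewrite mxE; apply: cvgM; [exact: cs | exact: cg].
Qed.

Lemma det_continuous_at m (g : T -> 'M[R]_m) :
  mx_continuous_at g -> continuous_at p0 (fun x => \det (g x)).
Proof.
move=> cg; apply: cvg_big => // [|s _]; first exact: add_continuous.
apply: cvgM; first exact: cvg_cst.
by apply: cvg_big => // [|i _]; [exact: mul_continuous | exact: cg].
Qed.

Lemma mx_continuous_adj m (g : T -> 'M[R]_m) :
  mx_continuous_at g -> mx_continuous_at (fun x => \adj (g x)).
Proof.
case: m g => [|m] g cg i j; first by case: i.
rewrite /continuous_at; under eq_fun do rewrite mxE /cofactor.
rewrite mxE /cofactor; apply: cvgM; first exact: cvg_cst.
apply: det_continuous_at => r s; rewrite /continuous_at.
by under eq_fun do rewrite !mxE; rewrite !mxE; apply: cg.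
Qed.

(* Cramer's rule [invmx M = (\det M)^-1 *: \adj M] holds near an invertible
   [g p0], since the determinant stays nonzero there. *)
Lemma mx_continuous_invmx m (g : T -> 'M[R]_m) :
  g p0 \in unitmx -> mx_continuous_at g -> mx_continuous_at (fun x => invmx (g x)).
Proof.
move=> u0 cg.
have cdet := det_continuous_at cg.
have det0 : \det (g p0) != 0 by rewrite -unitfE -unitmxE.
have near_cramer : \forall x \near p0, invmx (g x) = (\det (g x))^-1 *: \adj (g x).
  near=> x; rewrite /invmx unitmxE unitfE ifT //.
  by near: x; exact: cvgr_neq0 cdet det0.
move=> i j; apply: (cvg_trans (near_eq_cvg _)).
  by near=> x; rewrite (near near_cramer x).
rewrite /invmx u0.
by apply: mx_continuous_scale; [apply: cvgV | exact: mx_continuous_adj].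
Unshelve. all: by end_near.
Qed.

Lemma bform_continuous_at l (g : T -> 'M[R]_l) :
  mx_continuous_at g -> forall x y, continuous_at p0 (fun p => bform (g p) x y).
Proof.
move=> cg x y; rewrite /bform.
have c : mx_continuous_at (fun p => x^T *m g p *m y).
  apply: mx_continuous_mul; last exact: mx_continuous_cst.
  by apply: mx_continuous_mul => //; apply: mx_continuous_cst.
exact: c 0 0.
Qed.

End EntrywiseContinuity.

Section FfunContinuity.
Variables (R : realType) (k n : nat) (Is : 'I_n -> {set 'I_k}) (a : 'cV[R]_k).
Local Notation T := ('rV[R]_n * 'M[R]_k)%type.
Local Notation F := (fun p : T => Ffun Is a p.1 p.2).

Definition Ffun_dom : set T := [set p : T | (forall i, 0 <= p.1 0 i) /\ Spd p.2].

Lemma mx_continuous_fst (p0 : T) : mx_continuous_at p0 (fun p : T => p.1).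
Proof.
move=> i j; rewrite /continuous_at.
apply: (@cvg_comp _ _ _ fst (fun M : 'rV[R]_n => M i j) _ (nbhs p0.1)).
  exact: cvg_fst.
exact: coord_continuous.
Qed.

Lemma mx_continuous_snd (p0 : T) : mx_continuous_at p0 (fun p : T => p.2).
Proof.
move=> i j; rewrite /continuous_at.
apply: (@cvg_comp _ _ _ snd (fun M : 'M[R]_k => M i j) _ (nbhs p0.2)).
  exact: cvg_snd.
exact: coord_continuous.
Qed.

Lemma mx_continuous_principal_mx (p0 : T) I :
  mx_continuous_at p0 (fun p : T => principal_mx I p.2).
Proof.
apply: mx_continuous_mul; last exact: mx_continuous_cst.
by apply: mx_continuous_mul; [exact: mx_continuous_cst | exact: mx_continuous_snd].
Qed.

Lemma mx_continuous_Msum (p0 : T) : Spd p0.2 ->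
  mx_continuous_at p0 (fun p : T => Msum Is p.1 p.2).
Proof.
move=> hA; apply: mx_continuous_sum => i.
apply: mx_continuous_scale; first exact: mx_continuous_fst.
apply: mx_continuous_mul; last exact: mx_continuous_cst.
apply: mx_continuous_mul; first exact: mx_continuous_cst.
apply: mx_continuous_invmx; first exact: principal_mx_unitmx.
exact: mx_continuous_principal_mx.
Qed.

Lemma near_fst_pos (p0 : T) :
  \forall p \near p0, forall i, 0 < p0.1 0 i -> 0 < (p : T).1 0 i.
Proof.
pose pos_at i (p : T) := 0 < p0.1 0 i -> 0 < p.1 0 i.
apply: (@filter_forall T 'I_n pos_at _ (nbhs_filter p0)) => i; rewrite /pos_at.
have [pos|_] := ltP 0 (p0.1 0 i); last exact: nearW.
have cf := @mx_continuous_fst p0 0 i.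
by apply: filterS (@cvgr_gt _ _ _ _ _ _ cf 0 pos) => p ? _.
Qed.

(* At a point where [a = M y0], [F] is squeezed between the continuous lower
   bound [x := y0] of [Ffun_ge_cross] and the continuous upper bound of
   [Ffun_le_sum] built from [range_weights]; both are tight at the point. *)
Lemma Ffun_cvg_in_range (p0 : T) y0 : Ffun_dom p0 -> Msum Is p0.1 p0.2 *m y0 = a ->
  F p @[p --> within Ffun_dom (nbhs p0)] --> F p0.
Proof.
move=> [nu0_ge0 A0spd] May0.
set w := range_weights Is p0.1 p0.2 y0.
have w_supp i : 0 < p0.1 0 i \/ w i = 0 by apply: range_weights_supp.
pose L (p : T) := 2 * vdot a y0 - bform (Msum Is p.1 p.2) y0 y0.
pose U (p : T) := \sum_i bform (principal_mx (Is i) p.2) (w i) (w i) / p.1 0 i.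
have L0 : L p0 = bform (Msum Is p0.1 p0.2) y0 y0.
  by rewrite /L -{1}May0 vdot_mulmx_sym ?Msum_sym //; lra.
have U0 : U p0 = bform (Msum Is p0.1 p0.2) y0 y0 by apply: sum_range_weights.
have cL : continuous_at p0 L.
  apply: cvgD; first exact: cvg_cst.
  by apply: cvgN; exact: bform_continuous_at (mx_continuous_Msum A0spd) _ _.
have cU : continuous_at p0 U.
  apply: cvg_big => // [|i _]; first exact: add_continuous.
  case: (w_supp i) => [pos|w0].
    have cH := @mx_continuous_principal_mx p0 (Is i).
    apply: cvgM; first exact: bform_continuous_at cH _ _.
    by apply: cvgV; [rewrite gt_eqF | exact: mx_continuous_fst].
  rewrite /continuous_at.
  under eq_fun do rewrite w0 bform0r mul0r.
  by rewrite w0 bform0r mul0r; apply: cvg_cst.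
have bounds : \forall p \near within Ffun_dom (nbhs p0), ((L p)%:E <= F p <= (U p)%:E)%E.
  near=> p.
  have [nu_ge0 Aspd] : Ffun_dom p by near: p; apply: withinT.
  have nu_pos : forall i, 0 < p0.1 0 i -> 0 < p.1 0 i.
    by near: p; apply: cvg_within; apply: near_fst_pos.
  rewrite Ffun_ge_cross //=; apply: Ffun_le_sum => //.
  - by move=> i; case: (w_supp i) => [/nu_pos|]; [left | right].
  - by rewrite -May0 Msum_mulmx_weights.
rewrite (Ffun_range A0spd May0); apply: (squeeze_cvge bounds).
- by apply: cvg_EFin; [exact: nearW | rewrite -L0; apply: cvg_within_filter].
- by apply: cvg_EFin; [exact: nearW | rewrite -U0; apply: cvg_within_filter].
Unshelve. all: by end_near.
Qed.

(* Off the range, a kernel direction [z] of [M] with [<a, z> != 0] yields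
   lower bounds [x := t z] of [Ffun_ge_cross] that are continuous and
   arbitrarily large at the point. *)
Lemma Ffun_cvg_notin_range (p0 : T) : Ffun_dom p0 -> ~ in_range (Msum Is p0.1 p0.2) a ->
  F p @[p --> within Ffun_dom (nbhs p0)] --> F p0.
Proof.
move=> [nu0_ge0 A0spd] aM.
have [z [Mz az]] := notin_range_ker (Msum_sym Is p0.1 A0spd) aM.
rewrite Ffun_notin_range //; apply/cvgeyPgt => B.
pose t := (B + 1) / (2 * vdot a z).
pose L (p : T) := 2 * vdot a (t *: z) - bform (Msum Is p.1 p.2) (t *: z) (t *: z).
have cL : continuous_at p0 L.
  apply: cvgD; first exact: cvg_cst.
  by apply: cvgN; exact: bform_continuous_at (mx_continuous_Msum A0spd) _ _.
have L0 : L p0 = B + 1.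
  rewrite /L vdotZr !bformZl !bformZr.
  have -> : bform (Msum Is p0.1 p0.2) z z = 0 by rewrite /bform -mulmxA Mz mulmx0 mxE.
  by rewrite !mulr0 subr0 /t; field.
have BL : \forall p \near within Ffun_dom (nbhs p0), B < L p.
  by apply: cvg_within; apply: (cvgr_gt _ cL); rewrite L0 ltrDl.
near=> p.
have [nu_ge0 Aspd] : Ffun_dom p by near: p; apply: withinT.
apply: lt_le_trans (Ffun_ge_cross Is a (t *: z) Aspd nu_ge0).
by rewrite lte_fin; near: p.
Unshelve. all: by end_near.
Qed.

Lemma Ffun_continuous_within : {within Ffun_dom, continuous F}.
Proof.
apply/subspace_continuousP => p0 Dp0.
have [[y0 May0]|aM] := pselect (in_range (Msum Is p0.1 p0.2) a).
  exact: Ffun_cvg_in_range May0.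
exact: Ffun_cvg_notin_range.
Qed.

End FfunContinuity.

Unset Implicit Arguments. Set Strict Implicit.

Theorem lemmaE6 (R : realType) (k m n : nat)
  (Is : 'I_n -> {set 'I_k}) (c : 'I_n -> 'cV[R]_m) (B0 : 'cV[R]_m)
  (a : 'cV[R]_k) :
  injective Is ->
  (forall i, Is i != finset.set0) ->
  (forall i j, 0 <= c i j 0) ->
  (forall j, 0 < B0 j 0) ->
  a != 0 ->
  {within [set p : 'rV[R]_n * 'M[R]_k | Kset c B0 p.1 /\ @Spd R k p.2],
     continuous (fun p : 'rV[R]_n * 'M[R]_k => Ffun Is a p.1 p.2)}.
Proof.
move=> _ _ _ _ _.
apply: (@continuous_subspaceW _ _ _ (@Ffun_dom R k n)).
  by move=> p [[nu_ge0 _] Aspd].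
exact: Ffun_continuous_within.
Qed.
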